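(* Let $G=(V,E)$ be a DAG and $ij\in E$. If $A\subseteq V$ is identifying for the edge $ij$, i.e. $\lambda_{ij|A}(\phi_G(\Omega,\Lambda))=\lambda_{ij}$ for all parameters $(\Omega,\Lambda)$, then $i\in A\subseteq V\setminus\overline{\mathrm{de}}(j)$.
   Context: $G=(V,E)$ is a DAG, edges $i\to j$ written $ij$; $\mathrm{de}(j)$ descendants of $j$ (excluding $j$), $\overline{\mathrm{de}}(j)=\{j\}\cup\mathrm{de}(j)$. Parameters: $\Omega=\mathrm{diag}(\omega_i)$ with $\omega_i>0$, $\Lambda=(\lambda_{ij})$ with $\lambda_{ij}=0$ for $ij\notin E$. $\phi_G(\Omega,\Lambda)=(I-\Lambda)^{-T}\Omega(I-\Lambda)^{-1}$. $\Sigma_A$ principal submatrix; for $K\subseteq V$ and $i,j$, $\Sigma_{ij|K}$ the submatrix with rows $(i,K)$ and columns $(j,K)$ (if $j\in K$ it has a repeated column); $\lambda_{ij|A}(\Sigma)=|\Sigma_{ij|A\setminus\{i\}}|/|\Sigma_A|$. *)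

From HB Require Import structures.
From mathcomp Require Import all_boot all_order all_algebra.
From mathcomp Require Import reals.
Set Implicit Arguments. Unset Strict Implicit. Unset Printing Implicit Defensive.
Import Order.TTheory GRing.Theory Num.Theory.
Local Open Scope ring_scope.

Definition de (n : nat) (e : rel 'I_n) (j : 'I_n) : {set 'I_n} :=
  [set k | [exists k', e j k' && connect e k' k]].

Definition debar (n : nat) (e : rel 'I_n) (j : 'I_n) : {set 'I_n} :=
  j |: de e j.

Definition is_dag (n : nat) (e : rel 'I_n) : Prop :=
  forall i : 'I_n, i \notin de e i.

Definition phiG (R : fieldType) (n : nat) (omega : 'I_n -> R) (L : 'M[R]_n)
  : 'M[R]_n :=
  (invmx (1%:M - L))^T *m diag_mx (\row_k omega k) *m invmx (1%:M - L).

Definition subPrinc (R : ringType) (n : nat) (S : 'M[R]_n) (A : {set 'I_n})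
  : 'M[R]_#|A| :=
  \matrix_(a < #|A|, b < #|A|) S (enum_val a) (enum_val b).

(* Sigma_{ij|K}: rows (i, K), columns (j, K), K ordered by enum K. *)
Definition subCond (R : ringType) (n : nat) (S : 'M[R]_n) (i j : 'I_n)
  (K : {set 'I_n}) : 'M[R]_(#|K|.+1) :=
  \matrix_(a < #|K|.+1, b < #|K|.+1)
     S (nth i (i :: enum K) a) (nth j (j :: enum K) b).

Definition lamA (R : fieldType) (n : nat) (i j : 'I_n) (A : {set 'I_n})
  (S : 'M[R]_n) : R :=
  \det (subCond S i j (A :\ i)) / \det (subPrinc S A).

From HB Require Import structures.
From mathcomp Require Import all_boot all_order all_algebra.
From mathcomp Require Import reals ring.
Set Implicit Arguments. Unset Strict Implicit. Unset Printing Implicit Defensive.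
Import Order.TTheory GRing.Theory Num.Theory.
Local Open Scope ring_scope.

(* If i is not in A, scaling Omega by 2 scales lambda_{ij|A} by 2, as the
   numerator minor has one more row than the denominator; this is impossible
   for Lambda the single edge ij with weight 1. If j is in A, the numerator
   minor has a repeated column.
   If some a in A descends from j, follow a path i -> j -> ... -> d to the
   first such vertex d and give its edges weight 1. On the rows in A, column j
   of Sigma = phi_G(Omega, Lambda) is (1 - t) (column i) + t (column d) with
   t = omega_j / s, s the total weight of the path after i; since d is in
   A \ {i}, lambda_{ij|A} = (1 - t) c with c depending only on Sigma on A x A.
   Shifting weight between j and d changes t but neither s nor Sigma on A x A,
   so lambda_{ij|A} cannot stay equal to 1. *)

Definition identifying (R : numFieldType) n (e : rel 'I_n) (i j : 'I_n)
    (A : {set 'I_n}) : Prop :=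
  forall (omega : 'I_n -> R) (L : 'M[R]_n),
    (forall k, 0 < omega k) -> (forall k l, ~~ e k l -> L k l = 0) ->
    lamA i j A (phiG omega L) = L i j.

Section SubCondMinors.
Variables (R : fieldType) (n : nat).
Implicit Types (S : 'M[R]_n) (i j k : 'I_n) (K A : {set 'I_n}).

Definition condcol S i K k : 'cV[R]_#|K|.+1 := \col_a S (nth i (i :: enum K) a) k.

Definition subCond_col S i j K (c : 'cV[R]_#|K|.+1) : 'M[R]_#|K|.+1 :=
  \matrix_(a, b) if b == ord0 then c a ord0 else subCond S i j K a b.
Arguments subCond_col : clear implicits.

Lemma subCond_colE S i j K k :
  subCond_col S i j K (condcol S i K k) = subCond S i k K.
Proof.
apply/matrixP => a b; rewrite !mxE; case: eqP => [-> //|]; case: b => [[|b] lt_b] ob.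
  by case: ob; apply: val_inj.
by congr (S _ _); apply: set_nth_default; rewrite /= -cardE.
Qed.

Lemma det_subCond_col_lin S i j K a b c1 c2 :
  \det (subCond_col S i j K (a *: c1 + b *: c2)) =
  a * \det (subCond_col S i j K c1) + b * \det (subCond_col S i j K c2).
Proof.
rewrite -det_tr -[\det (subCond_col _ _ _ _ c1)]det_tr.
rewrite -[\det (subCond_col _ _ _ _ c2)]det_tr.
apply: (determinant_multilinear (i0 := ord0)).
- by apply/rowP => k; rewrite !mxE eqxx.
- by apply/matrixP => a' k; rewrite !mxE.
- by apply/matrixP => a' k; rewrite !mxE.
Qed.

Lemma det_subCond_mem S i K k : k \in K -> \det (subCond S i k K) = 0.
Proof.
move=> kK; have lt_k : ((index k (enum K)).+1 < #|K|.+1)%N.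
  by rewrite ltnS cardE index_mem mem_enum.
rewrite -det_tr; apply: (determinant_alternate (i1 := ord0) (i2 := Ordinal lt_k)).
  by rewrite -val_eqE.
by move=> a; rewrite !mxE /= nth_index ?mem_enum.
Qed.

Lemma mem_nth_enum1 x K (a : 'I_#|K|.+1) : nth x (x :: enum K) a \in x |: K.
Proof.
case: a => [[|a] /= lt_a]; first exact: setU11.
by rewrite setU1r // -mem_enum mem_nth // -cardE.
Qed.

Lemma det_subCond_lin S i j K k1 k2 a b :
  {in i |: K, forall r, S r j = a * S r k1 + b * S r k2} ->
  \det (subCond S i j K) = a * \det (subCond S i k1 K) + b * \det (subCond S i k2 K).
Proof.
move=> S_j; have colE : condcol S i K j = a *: condcol S i K k1 + b *: condcol S i K k2.
  by apply/matrixP => r0 c; rewrite !mxE S_j ?mem_nth_enum1.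
by rewrite -!(subCond_colE _ _ j) colE det_subCond_col_lin.
Qed.

Lemma subCond_eq S1 S2 i k K : {in i |: K & k |: K, S1 =2 S2} ->
  subCond S1 i k K = subCond S2 i k K.
Proof. by move=> S12; apply/matrixP => a b; rewrite !mxE S12 ?mem_nth_enum1. Qed.

Lemma subPrinc_eq S1 S2 A : {in A &, S1 =2 S2} -> subPrinc S1 A = subPrinc S2 A.
Proof. by move=> S12; apply/matrixP => a b; rewrite !mxE S12 ?enum_valP. Qed.

Lemma lamA_eq0 i j A S : j \in A :\ i -> lamA i j A S = 0.
Proof. by move=> jA; rewrite /lamA det_subCond_mem ?mul0r. Qed.

Lemma lamA_scale i j A (a : R) S :
  i \notin A -> a != 0 -> lamA i j A (a *: S) = a * lamA i j A S.
Proof.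
move=> iA a0; rewrite /lamA.
have -> : A :\ i = A.
  by apply/setP => x; rewrite !inE; case: eqP => // ->; rewrite (negbTE iA).
have -> : subCond (a *: S) i j A = a *: subCond S i j A.
  by apply/matrixP => u v; rewrite !mxE.
have -> : subPrinc (a *: S) A = a *: subPrinc S A.
  by apply/matrixP => u v; rewrite !mxE.
by rewrite !detZ exprS invfM mulrACA mulfK ?expf_neq0.
Qed.

Lemma phiG_scale (a : R) (omega : 'I_n -> R) L :
  phiG (fun k => a * omega k) L = a *: phiG omega L.
Proof.
rewrite /phiG; have -> : diag_mx (\row_k (a * omega k)) = a *: diag_mx (\row_k omega k).
  by apply/matrixP => u v; rewrite !mxE mulrnAr.
by rewrite -scalemxAr -scalemxAl.
Qed.
End SubCondMinors.

Lemma sumr_delta (R : pzSemiRingType) n (F : 'I_n -> R) a :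
  \sum_w (w == a)%:R * F w = F a.
Proof.
by rewrite (bigD1 a) //= eqxx mul1r big1 ?addr0 // => w /negbTE ->; rewrite mul0r.
Qed.

Section PathCovariance.
Variables (R : fieldType) (n : nat) (q : seq 'I_n).
Hypothesis q_uniq : uniq q.
Implicit Types (u v w : 'I_n) (omega : 'I_n -> R).

Definition chain_mx : 'M[R]_n :=
  \matrix_(u, v) ((u \in q) && (v \in q) && (index v q == (index u q).+1))%:R.

Definition reach_mx : 'M[R]_n :=
  \matrix_(u, v)
    (if (u \in q) && (v \in q) then (index u q <= index v q)%N else u == v)%:R.

Lemma chain_mx_support (e : rel 'I_n) :
  sorted e q -> forall u v, ~~ e u v -> chain_mx u v = 0.
Proof.
move=> /sortedP e_q u v; apply: contraNeq; rewrite mxE.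
case: andP => [[/andP[uq vq] /eqP idx_v] _|]; last by rewrite eqxx.
rewrite -(nth_index u uq) -(nth_index u vq).
by rewrite idx_v; apply: e_q; rewrite -idx_v index_mem.
Qed.

Lemma chain_mx_row u w : chain_mx u w =
  ((u \in q) && ((index u q).+1 < size q)%N)%:R * (w == nth u q (index u q).+1)%:R.
Proof.
rewrite mxE -natrM mulnb; congr (_%:R); congr (nat_of_bool _).
apply/idP/idP => [/andP[/andP[-> wq] /eqP <-]|/andP[/andP[uq lt_u] /eqP ->]].
  by rewrite nth_index // index_mem wq eqxx.
by rewrite uq mem_nth // index_uniq // eqxx.
Qed.

Lemma reach_mx_in_l u v : u \in q ->
  reach_mx u v = ((v \in q) && (index u q <= index v q)%N)%:R.
Proof.
move=> uq; rewrite mxE uq /=; case vq: (v \in q) => //.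
by have -> : (u == v) = false by apply: contraFF vq => /eqP <-.
Qed.

Lemma reach_mx_in_r w u : u \in q ->
  reach_mx w u = ((w \in q) && (index w q <= index u q)%N)%:R.
Proof.
move=> uq; rewrite mxE uq andbT; case wq: (w \in q) => //.
by have -> : (w == u) = false by apply: contraFF wq => /eqP ->.
Qed.

Lemma reach_mx_out_l u v : u \notin q -> reach_mx u v = (u == v)%:R.
Proof. by move=> /negbTE uq; rewrite mxE uq. Qed.

Lemma reach_mx_out_r w u : u \notin q -> reach_mx w u = (w == u)%:R.
Proof. by move=> /negbTE uq; rewrite mxE uq andbF. Qed.

Lemma chain_mx_reach : (1%:M - chain_mx) *m reach_mx = 1%:M.
Proof.
apply/matrixP => u v; rewrite mulmxBl mul1mx !mxE.
under eq_bigr => w _ do rewrite chain_mx_row -mulrA.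
rewrite -mulr_sumr sumr_delta.
have [uq|uq] := boolP (u \in q); rewrite /=; last by rewrite mul0r subr0.
have [vq|vq] := boolP (v \in q); last first.
  have [lt_u|_] := ltnP (index u q).+1 (size q); rewrite ?mul0r ?subr0 //.
  by rewrite mul1r reach_mx_in_l ?mem_nth // (negbTE vq) subr0.
have uvE : (u == v) = (index u q == index v q).
  by apply/eqP/eqP => [-> //|]; apply: index_inj.
have [lt_u|le_size] := ltnP (index u q).+1 (size q).
  rewrite mul1r reach_mx_in_l ?mem_nth // index_uniq // vq uvE.
  by case: ltngtP; rewrite ?subrr ?subr0.
have le_vu : (index v q <= index u q)%N.
  by rewrite -ltnS (leq_trans _ le_size) ?index_mem.
by rewrite mul0r subr0 uvE eqn_leq le_vu andbT.
Qed.

Lemma invmx_chain : invmx (1%:M - chain_mx) = reach_mx.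
Proof.
have [U _] := mulmx1_unit chain_mx_reach.
by rewrite -[RHS](mulKmx U) chain_mx_reach mulmx1.
Qed.

Lemma phiG_chainE omega u v :
  phiG omega chain_mx u v = \sum_w reach_mx w u * omega w * reach_mx w v.
Proof.
by rewrite /phiG invmx_chain mul_mx_diag !mxE; apply: eq_bigr => w _; rewrite !mxE.
Qed.

Lemma phiG_chain_out_l omega u v :
  u \notin q -> phiG omega chain_mx u v = (u == v)%:R * omega u.
Proof.
move=> uq; rewrite phiG_chainE.
under eq_bigr => w _ do rewrite (reach_mx_out_r w uq) -mulrA.
by rewrite sumr_delta reach_mx_out_l // mulrC.
Qed.

Lemma phiG_chain_out_r omega u v :
  v \notin q -> phiG omega chain_mx u v = (u == v)%:R * omega v.
Proof.
move=> vq; rewrite phiG_chainE.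
under eq_bigr => w _ do rewrite (reach_mx_out_r w vq) mulrC.
by rewrite sumr_delta reach_mx_out_l // eq_sym.
Qed.

Lemma phiG_chain_in omega u v : u \in q -> v \in q ->
  phiG omega chain_mx u v =
  \sum_(w <- take (minn (index u q) (index v q)).+1 q) omega w.
Proof.
move=> uq vq; rewrite phiG_chainE (big_uniq _ (take_uniq _ q_uniq)).
rewrite [RHS]big_mkcond /=.
apply: eq_bigr => w _; rewrite !reach_mx_in_r //.
have [wq|wq] := boolP (w \in q); last first.
  by rewrite !mul0r ifF //; apply: contraNF wq; apply: mem_take.
rewrite in_take // ltnS leq_min.
by case: (_ <= _)%N; case: (_ <= _)%N; rewrite ?mulr1 ?mul1r ?mulr0 ?mul0r.
Qed.
End PathCovariance.

Lemma sum_succ_eq (T : eqType) (s : seq T) x :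
  (\sum_(w <- s) (w == x).+1 = size s + count_mem x s)%N.
Proof.
elim: s => [|y s IH]; first by rewrite big_nil.
by rewrite big_cons IH /= !addSn addnCA.
Qed.

Section ChainThroughA.
Variables (R : numFieldType) (n : nat) (i j : 'I_n) (p : seq 'I_n).
Variable A : {set 'I_n}.
Hypothesis q_uniq : uniq (i :: j :: p).
Hypotheses (iA : i \in A) (jA : j \notin A) (dA : last j p \in A).
Hypothesis p_A : {in p, forall x, x \in A -> x = last j p}.
Implicit Types (omega : 'I_n -> R).

Local Notation q := (i :: j :: p).
Local Notation d := (last j p).
Local Notation Sigma omega := (phiG omega (chain_mx R q)).

Definition tail_sum omega := \sum_(w <- j :: p) omega w.

Lemma i_notin_tail : i \notin j :: p.
Proof. by case/andP: q_uniq. Qed.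

Lemma d_in_tail : d \in j :: p.
Proof. exact: mem_last. Qed.

Lemma d_neq_i : d != i.
Proof. by apply: contraNneq i_notin_tail => <-; apply: d_in_tail. Qed.

Lemma d_in_q : d \in q.
Proof. by rewrite inE d_in_tail orbT. Qed.

Lemma j_in_q : j \in q.
Proof. by rewrite !inE eqxx orbT. Qed.

Lemma d_neq_j : d != j.
Proof. by apply: contraNneq jA => <-. Qed.

Lemma chain_cap_A {x} : x \in q -> x \in A -> x = i \/ x = d.
Proof.
rewrite !inE => /or3P[/eqP->|/eqP->|xp] xA; first by left.
  by move: jA; rewrite xA.
by right; apply: p_A.
Qed.

Lemma index_i : index i q = 0%N. Proof. by rewrite /= eqxx. Qed.

Lemma index_d : index d q = (size p).+1.
Proof. by rewrite -[d]/(last i (j :: p)) index_last. Qed.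

Lemma Sigma_i_l omega v : v \in q -> Sigma omega i v = omega i.
Proof. by move=> vq; rewrite phiG_chain_in ?mem_head // index_i min0n big_seq1. Qed.

Lemma Sigma_i_r omega u : u \in q -> Sigma omega u i = omega i.
Proof. by move=> uq; rewrite phiG_chain_in ?mem_head // index_i minn0 big_seq1. Qed.

Lemma i_neq_j : i != j.
Proof. by apply: contraNneq i_notin_tail => ->; apply: mem_head. Qed.

Lemma chain_mx_ij : chain_mx R q i j = 1.
Proof. by rewrite mxE mem_head j_in_q /= !eqxx (negbTE i_neq_j). Qed.

Lemma Sigma_d_j omega : Sigma omega d j = omega i + omega j.
Proof.
rewrite phiG_chain_in ?d_in_q ?j_in_q // index_d /= (negbTE i_neq_j) eqxx.
by rewrite minnSS minn0 /= take0 big_cons big_seq1.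
Qed.

Lemma Sigma_d_d omega : Sigma omega d d = omega i + tail_sum omega.
Proof.
rewrite phiG_chain_in ?d_in_q // minnn index_d.
by rewrite -[(size p).+2]/(size q) take_size big_cons.
Qed.

Lemma Sigma_col_j omega r : tail_sum omega != 0 -> r \in A ->
  let t := omega j / tail_sum omega in
  Sigma omega r j = (1 - t) * Sigma omega r i + t * Sigma omega r d.
Proof.
move=> s0 rA t; have [rq|rq] := boolP (r \in q).
  case: (chain_cap_A rq rA) => ->.
    by rewrite !Sigma_i_l ?j_in_q ?mem_head ?d_in_q; ring.
  by rewrite Sigma_d_j Sigma_i_r ?d_in_q // Sigma_d_d /t; field.
have r_neq x : x \in q -> (r == x) = false by move=> xq; apply: contraNF rq => /eqP ->.
rewrite !phiG_chain_out_l // !r_neq ?j_in_q ?mem_head ?d_in_q //.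
by rewrite !mul0r !mulr0 addr0.
Qed.

Lemma lamA_chain omega : tail_sum omega != 0 ->
  lamA i j A (Sigma omega) = (1 - omega j / tail_sum omega) *
    (\det (subCond (Sigma omega) i i (A :\ i)) / \det (subPrinc (Sigma omega) A)).
Proof.
move=> s0; have dK : d \in A :\ i by rewrite !inE dA d_neq_i.
have S_j : {in i |: (A :\ i), forall r, Sigma omega r j =
    (1 - omega j / tail_sum omega) * Sigma omega r i
    + omega j / tail_sum omega * Sigma omega r d}.
  by move=> r; rewrite setD1K // => rA; apply: Sigma_col_j.
by rewrite /lamA (det_subCond_lin S_j) (det_subCond_mem _ _ dK) mulr0 addr0 mulrA.
Qed.

Lemma Sigma_agree omega1 omega2 :
  omega1 i = omega2 i -> tail_sum omega1 = tail_sum omega2 ->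
  {in [predC q], omega1 =1 omega2} -> {in A &, Sigma omega1 =2 Sigma omega2}.
Proof.
move=> e_i e_tail e_out u v uA vA.
have [uq|uq] := boolP (u \in q); last by rewrite !phiG_chain_out_l // e_out.
have [vq|vq] := boolP (v \in q); last by rewrite !phiG_chain_out_r // e_out.
case: (chain_cap_A uq uA) => ->; first by rewrite !Sigma_i_l.
case: (chain_cap_A vq vA) => ->; first by rewrite !Sigma_i_r ?d_in_q.
by rewrite !Sigma_d_d e_i e_tail.
Qed.

Lemma chain_not_identifying (e : rel 'I_n) :
  path e i (j :: p) -> ~ identifying R e i j A.
Proof.
move=> e_q ident.
pose omega_at (x k : 'I_n) : R := (k == x).+1%:R.
pose s : R := (size p).+2%:R; have s0 : s != 0 by rewrite pnatr_eq0.
have tail_at x : x \in j :: p -> tail_sum (omega_at x) = s.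
  move=> xq; rewrite /tail_sum -natr_sum sum_succ_eq count_uniq_mem ?xq ?addn1 //.
  by case/andP: q_uniq.
have lamA_at x : x \in j :: p -> (1 - omega_at x j / s) *
    (\det (subCond (Sigma (omega_at x)) i i (A :\ i))
     / \det (subPrinc (Sigma (omega_at x)) A)) = 1.
  move=> xq; rewrite -(tail_at x xq) -lamA_chain ?tail_at // ident ?chain_mx_ij //.
  exact: chain_mx_support.
have Sigma_dj : {in A &, Sigma (omega_at d) =2 Sigma (omega_at j)}.
  apply: Sigma_agree => [||k]; rewrite ?tail_at ?d_in_tail ?mem_head // /omega_at.
    by rewrite eq_sym (negbTE d_neq_i) (negbTE i_neq_j).
  rewrite inE => kq; have k_neq x : x \in q -> (k == x) = false.
    by move=> xq; apply: contraNF kq => /eqP->.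
  by rewrite !k_neq ?d_in_q ?j_in_q.
have Sigma_dj' : {in i |: (A :\ i) & i |: (A :\ i),
    Sigma (omega_at d) =2 Sigma (omega_at j)} by rewrite setD1K.
move: (lamA_at j (mem_head _ _)) (lamA_at d d_in_tail).
rewrite -(subCond_eq Sigma_dj') -(subPrinc_eq Sigma_dj) /omega_at.
rewrite eqxx eq_sym (negbTE d_neq_j).
set z := (\det _ / \det _) => /= h2 h1.
have zs0 : z / s = 0.
  transitivity ((1 - 1 / s) * z - (1 - 2 / s) * z); first by ring.
  by rewrite h1 h2 subrr.
have z0 : z = 0.
  by apply/eqP; move/eqP: zs0; rewrite mulf_eq0 invr_eq0 (negbTE s0) orbF.
by move: h1; rewrite z0 mulr0 => /esym/eqP; rewrite oner_eq0.
Qed.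
End ChainThroughA.

Lemma path_to_first_mem (T : finType) (e : rel T) (A : {set T}) x y :
  x \notin A -> y \in A -> connect e x y ->
  exists p, [/\ path e x p, uniq (x :: p), last x p \in A
              & {in p, forall z, z \in A -> z = last x p}].
Proof.
move=> xA yA /connectP[p0 e_p0 y_last]; rewrite y_last in yA.
case: (shortenP e_p0) yA => p1 e_p1 u_p1 _ yA.
have hasA : has [in A] p1.
  apply/hasP; exists (last x p1) => //.
  by case/predU1P: (mem_last x p1) => // xl; move: xA; rewrite -xl yA.
set t := find [in A] p1; have lt_t : (t < size p1)%N by rewrite -has_find.
exists (take t.+1 p1); rewrite (take_nth x lt_t) last_rcons -(take_nth x lt_t).
split; first exact: take_path.
- by rewrite -[x :: _]/(take t.+2 (x :: p1)) take_uniq.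
- exact: nth_find.
move=> z; rewrite (take_nth x lt_t) mem_rcons inE => /predU1P[-> //|/(nthP x)[k]].
rewrite size_take lt_t => lt_k <-; rewrite nth_take //.
by rewrite (before_find x lt_k).
Qed.

Lemma dag_edge_neq n (e : rel 'I_n) i j : is_dag e -> e i j -> i != j.
Proof.
move=> dag e_ij; apply: contraNneq (dag i) => ij.
by rewrite inE; apply/existsP; exists j; rewrite e_ij -ij connect0.
Qed.

Lemma dag_notin_path n (e : rel 'I_n) i j p :
  is_dag e -> e i j -> path e j p -> i \notin j :: p.
Proof.
move=> dag e_ij e_p; apply: contraNN (dag i) => ip.
by rewrite inE; apply/existsP; exists j; rewrite e_ij (path_connect e_p).
Qed.

Lemma delta_mx_support (R : pzRingType) n (e : rel 'I_n) i j :
  e i j -> forall k l, ~~ e k l -> delta_mx i j k l = 0 :> R.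
Proof.
move=> e_ij k l; rewrite mxE.
by case: (k =P i) => [->|]; case: (l =P j) => [->|] //; rewrite e_ij.
Qed.

Lemma identifying_mem_i (R : numFieldType) n (e : rel 'I_n) i j A :
  e i j -> identifying R e i j A -> i \in A.
Proof.
move=> e_ij ident; apply/contraT => iA.
pose omega (k : 'I_n) : R := 1.
have pos1 k : 0 < omega k by exact: ltr01.
have pos2 k : 0 < 2 * omega k by rewrite mulr1 ltr0n.
have supp := delta_mx_support R e_ij.
have := ident _ _ pos2 supp.
rewrite phiG_scale lamA_scale ?pnatr_eq0 // (ident _ _ pos1 supp) mxE !eqxx mulr1.
by move/eqP; rewrite pnatr_eq1.
Qed.

Lemma identifying_notin_j (R : numFieldType) n (e : rel 'I_n) i j A :
  i != j -> e i j -> identifying R e i j A -> j \notin A.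
Proof.
move=> ij e_ij ident; apply/negP => jA.
have := ident (fun _ => 1) (delta_mx i j) (fun _ => ltr01) (delta_mx_support R e_ij).
by rewrite lamA_eq0 ?inE 1?eq_sym ?ij // mxE !eqxx => /esym/eqP; rewrite oner_eq0.
Qed.

Theorem mainTheorem2 (R : realType) (n : nat) (e : rel 'I_n)
  (Hdag : is_dag e) (i j : 'I_n) (Hij : e i j) (A : {set 'I_n})
  (Hident : forall (omega : 'I_n -> R) (L : 'M[R]_n),
      (forall k, 0 < omega k) ->
      (forall k l, ~~ e k l -> L k l = 0) ->
      lamA i j A (phiG omega L) = L i j) :
  i \in A /\ A \subset ~: debar e j.
Proof.
have ij := dag_edge_neq Hdag Hij.
have iA := identifying_mem_i Hij Hident.
have jA := identifying_notin_j ij Hij Hident.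
split => //; apply/subsetP => a aA; rewrite !inE negb_or.
have -> /= : a != j by apply: contraNneq jA => <-.
apply/negP => /existsP[k /andP[e_jk c_ka]].
have c_ja := connect_trans (connect1 e_jk) c_ka.
have [p [e_p u_p pA p_A]] := path_to_first_mem jA aA c_ja.
have u_ijp : uniq (i :: j :: p) by rewrite cons_uniq u_p (dag_notin_path Hdag Hij e_p).
by apply: (chain_not_identifying u_ijp iA jA pA p_A (e := e)) Hident; rewrite /= Hij.
Qed.
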